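(* Let $G$ be a group and let $\mathcal{F}$ be a collection of pairwise commensurable subgroups of $G$. Then $\mathcal{F}$ is a metric space under the function $d(H,K) := \log(c(H,K))$.
   Context: For subgroups $H,K$ of $G$, $c(H,K) = [H:H\cap K][K:H\cap K]$; $H$ and $K$ are commensurable if $c(H,K)<\infty$. *)

From Stdlib Require Import Reals ClassicalEpsilon.
Open Scope R_scope.

Record group := Group {
  carrier :> Type;
  mul : carrier -> carrier -> carrier;
  one : carrier;
  inv : carrier -> carrier;
  mulA : forall x y z, mul x (mul y z) = mul (mul x y) z;
  mul1g : forall x, mul one x = x;
  mulVg : forall x, mul (inv x) x = one
}.

Arguments mul {g}.
Arguments one {g}.
Arguments inv {g}.

Definition is_subgroup {G : group} (H : G -> Prop) : Prop :=
  H one /\ (forall x y, H x -> H y -> H (mul x y)) /\ (forall x, H x -> H (inv x)).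

Definition setI {G : group} (H K : G -> Prop) : G -> Prop := fun x => H x /\ K x.

(* [is_index H L n]: H has exactly n left cosets of L, i.e. there are
   n elements f 0, ..., f (n-1) of H lying in pairwise distinct cosets
   x L, and every element of H lies in one of these cosets. *)
Definition is_index {G : group} (H L : G -> Prop) (n : nat) : Prop :=
  exists f : nat -> G,
    (forall i, (i < n)%nat -> H (f i)) /\
    (forall i j, (i < n)%nat -> (j < n)%nat -> L (mul (inv (f i)) (f j)) -> i = j) /\
    (forall h, H h -> exists i, (i < n)%nat /\ L (mul (inv (f i)) h)).

(* The index [H : L] (meaningful when it is finite; junk value otherwise). *)
Definition index {G : group} (H L : G -> Prop) : nat :=
  epsilon (inhabits 0%nat) (fun n => is_index H L n).

Definition finite_index {G : group} (H L : G -> Prop) : Prop :=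
  exists n, is_index H L n.

Definition c {G : group} (H K : G -> Prop) : nat :=
  (index H (setI H K) * index K (setI H K))%nat.

(* H and K are commensurable iff c(H,K) < ∞, i.e. both indices are finite. *)
Definition commensurable {G : group} (H K : G -> Prop) : Prop :=
  finite_index H (setI H K) /\ finite_index K (setI H K).

Definition d {G : group} (H K : G -> Prop) : R := ln (INR (c H K)).

Definition metric_on {T : Type} (X : T -> Prop) (dist : T -> T -> R) : Prop :=
  (forall x y, X x -> X y -> 0 <= dist x y) /\
  (forall x y, X x -> X y -> (dist x y = 0 <-> x = y)) /\
  (forall x y, X x -> X y -> dist x y = dist y x) /\
  (forall x y z, X x -> X y -> X z -> dist x z <= dist x y + dist y z).

(* Counting cosets shows that [H : H ∩ L] <= [H : H ∩ K] [K : K ∩ L]: the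
   coset of x ∈ H modulo H ∩ L is determined by its coset modulo H ∩ K
   (represented by f_i) together with the coset of f_i^-1 x ∈ K modulo
   K ∩ L.  Multiplying with the symmetric inequality for L gives
   c(H,L) <= c(H,K) c(K,L), which is the triangle inequality after taking
   logarithms.  Moreover c(H,K) = 1 forces H ⊆ K and K ⊆ H, so d separates
   points. *)

From Stdlib Require Import Reals Lia List Permutation.
From Stdlib Require Import ClassicalEpsilon FunctionalExtensionality PropExtensionality.
Open Scope R_scope.

Lemma pigeonhole_rel (n m : nat) (R : nat -> nat -> Prop) :
  (forall t, (t < n)%nat -> exists p, (p < m)%nat /\ R t p) ->
  (forall t t' p, (t < n)%nat -> (t' < n)%nat -> R t p -> R t' p -> t = t') ->
  (n <= m)%nat.
Proof.
  intros Htot Hinj. apply Nat.nlt_ge; intro Hmn.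
  edestruct (Permutation_pigeonhole_rel R (l1 := seq 0 n) (l2 := seq 0 m))
    as (t & t' & l & Hperm & p & _ & Rt & Rt').
  - apply Forall_forall; intros t Ht%in_seq.
    destruct (Htot t ltac:(lia)) as (p & Hp & Rp).
    apply Exists_exists; exists p; rewrite in_seq; split; [lia | exact Rp].
  - now rewrite !length_seq.
  - assert (Hnodup : NoDup (t :: t' :: l))
      by exact (Permutation_NoDup Hperm (seq_NoDup n 0)).
    assert (Ht : In t (seq 0 n)) by (apply (Permutation_in _ (Permutation_sym Hperm)); now left).
    assert (Ht' : In t' (seq 0 n))
      by (apply (Permutation_in _ (Permutation_sym Hperm)); right; now left).
    apply in_seq in Ht, Ht'.
    inversion Hnodup as [| ? ? Hnotin _]; subst.
    apply Hnotin; left; symmetry; apply (Hinj t t' p); auto; lia.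
Qed.

Lemma ln_INR_le (m n : nat) : (0 < m)%nat -> (m <= n)%nat -> ln (INR m) <= ln (INR n).
Proof.
  intros Hm Hmn. destruct (Nat.eq_dec m n) as [<- | Hne]; [apply Rle_refl |].
  left; apply ln_increasing; [apply lt_0_INR; lia | apply lt_INR; lia].
Qed.

Lemma ln_INR_eq0 (n : nat) : (0 < n)%nat -> ln (INR n) = 0 <-> n = 1%nat.
Proof.
  intros Hn; split.
  - intro E; rewrite <- ln_1 in E.
    apply INR_eq, ln_inv; [apply lt_0_INR; lia | apply Rlt_0_1 | exact E].
  - intros ->; exact ln_1.
Qed.

Section Subgroups.
Context {G : group}.
Implicit Types (x y u v g : G) (H K L : G -> Prop).

Lemma mulgV x : mul x (inv x) = one.
Proof.
  transitivity (mul (mul (inv (inv x)) (inv x)) (mul x (inv x))).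
  - now rewrite mulVg, mul1g.
  - rewrite <- mulA, (mulA G (inv x) x), mulVg, mul1g; apply mulVg.
Qed.

Lemma mulg1 x : mul x one = x.
Proof. now rewrite <- (mulVg G x), mulA, mulgV, mul1g. Qed.

Lemma invgK x : inv (inv x) = x.
Proof. now rewrite <- (mulg1 (inv (inv x))), <- (mulVg G x), mulA, mulVg, mul1g. Qed.

Lemma invMg x y : inv (mul x y) = mul (inv y) (inv x).
Proof.
  transitivity (mul (mul (inv (mul x y)) (mul x y)) (mul (inv y) (inv x))).
  - now rewrite <- !mulA, (mulA G y (inv y)), mulgV, mul1g, mulgV, mulg1.
  - now rewrite mulVg, mul1g.
Qed.

Lemma invg1 : inv (@one G) = one.
Proof. now rewrite <- (mulg1 (inv one)), mulVg. Qed.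

Lemma mulKVg g x : mul g (mul (inv g) x) = x.
Proof. now rewrite mulA, mulgV, mul1g. Qed.

Lemma quot_translate g u v : mul (inv (mul (inv g) u)) (mul (inv g) v) = mul (inv u) v.
Proof. now rewrite invMg, invgK, <- mulA, mulKVg. Qed.

Lemma subgroup_quot_trans L g u v :
  is_subgroup L -> L (mul (inv g) u) -> L (mul (inv g) v) -> L (mul (inv u) v).
Proof.
  intros (_ & LM & LV) Lu Lv. rewrite <- (quot_translate g).
  apply LM; [apply LV |]; assumption.
Qed.

Lemma setI_subgroup H K : is_subgroup H -> is_subgroup K -> is_subgroup (setI H K).
Proof. unfold setI; firstorder. Qed.

Lemma setIC H K : setI H K = setI K H.
Proof.
  apply functional_extensionality; intro x.
  apply propositional_extensionality; unfold setI; tauto.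
Qed.

Lemma index_le H L n m : is_subgroup L -> is_index H L n -> is_index H L m -> (n <= m)%nat.
Proof.
  intros SL (f & fH & fsep & _) (g & _ & _ & gcov).
  apply (pigeonhole_rel n m (fun t p => L (mul (inv (g p)) (f t)))).
  - intros t Ht. destruct (gcov (f t) (fH t Ht)) as (p & Hp & Lp). eauto.
  - intros t t' p Ht Ht' Lt Lt'. apply fsep; auto.
    exact (subgroup_quot_trans L (g p) _ _ SL Lt Lt').
Qed.

Lemma index_spec H L : finite_index H L -> is_index H L (index H L).
Proof. exact (epsilon_spec _ (is_index H L)). Qed.

Lemma index_eq H L n : is_subgroup L -> is_index H L n -> index H L = n.
Proof.
  intros SL Hn.
  assert (Hidx : is_index H L (index H L)) by (apply index_spec; eexists; eauto).
  pose proof (index_le _ _ _ _ SL Hn Hidx). pose proof (index_le _ _ _ _ SL Hidx Hn). lia.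
Qed.

Lemma index_gt0 H L n : H one -> is_index H L n -> (0 < n)%nat.
Proof. intros H1 (f & _ & _ & fcov). destruct (fcov one H1) as (i & Hi & _). lia. Qed.

Lemma index_setI_sub H K : is_subgroup H -> is_subgroup K ->
  (forall x, H x -> K x) -> index H (setI H K) = 1%nat.
Proof.
  intros SH SK HK. apply index_eq; [now apply setI_subgroup |].
  exists (fun _ => one); split; [intros; apply SH | split; [intros; lia |]].
  intros h Hh; exists 0%nat; rewrite invg1, mul1g; split; [lia | split; auto].
Qed.

Lemma sub_of_index_setI1 H K : is_subgroup H -> is_subgroup K ->
  is_index H (setI H K) 1 -> forall x, H x -> K x.
Proof.
  intros (H1 & _) (_ & KM & KV) (f & _ & _ & fcov) h Hh.
  destruct (fcov one H1) as (i & Hi & _ & K1). destruct (fcov h Hh) as (j & Hj & _ & Kh).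
  replace i with 0%nat in K1 by lia. replace j with 0%nat in Kh by lia.
  rewrite mulg1 in K1. rewrite <- (mulKVg (f 0%nat) h).
  apply KM; [rewrite <- (invgK (f 0%nat)); apply KV |]; assumption.
Qed.

(* The cell of x ∈ H is encoded as i * b + j, where x ∈ f_i (H ∩ K) and
   f_i^-1 x ∈ g_j (K ∩ L). *)
Lemma index_setI_submul H K L a b n :
  is_subgroup H -> is_subgroup L ->
  is_index H (setI H K) a -> is_index K (setI K L) b -> is_index H (setI H L) n ->
  (n <= a * b)%nat.
Proof.
  intros SH SL (f & _ & _ & fcov) (g & _ & _ & gcov) (e & eH & esep & _).
  apply (pigeonhole_rel n (a * b) (fun t p => exists i j,
    p = (i * b + j)%nat /\ (i < a)%nat /\ (j < b)%nat /\
    H (mul (inv (f i)) (e t)) /\ L (mul (inv (g j)) (mul (inv (f i)) (e t))))).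
  - intros t Ht. destruct (fcov (e t) (eH t Ht)) as (i & Hi & HKi & KKi).
    destruct (gcov _ KKi) as (j & Hj & _ & Lj).
    exists (i * b + j)%nat; split; [nia | exists i, j; auto].
  - intros t t' p Ht Ht' (i & j & -> & Hi & Hj & Ht_i & Lt_j)
      (i' & j' & Ep & Hi' & Hj' & Ht'_i & Lt'_j).
    assert (i = i' /\ j = j') as [<- <-].
    { destruct (Nat.lt_trichotomy i i') as [C | [<- | C]]; nia. }
    apply esep; auto; split.
    + exact (subgroup_quot_trans H (f i) _ _ SH Ht_i Ht'_i).
    + rewrite <- (quot_translate (f i)).
      exact (subgroup_quot_trans L (g j) _ _ SL Lt_j Lt'_j).
Qed.

Section Commensurable.
Variables H K : G -> Prop.
Hypotheses (SH : is_subgroup H) (SK : is_subgroup K) (HK : commensurable H K).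

Lemma commensurable_index_spec :
  is_index H (setI H K) (index H (setI H K)) /\ is_index K (setI K H) (index K (setI K H)).
Proof. destruct HK as [FH FK]; rewrite (setIC K H); split; now apply index_spec. Qed.

Lemma c_gt0 : (0 < c H K)%nat.
Proof.
  destruct commensurable_index_spec as [IH IK]; unfold c; rewrite (setIC H K) at 2.
  apply Nat.mul_pos_pos;
    [exact (index_gt0 _ _ _ (proj1 SH) IH) | exact (index_gt0 _ _ _ (proj1 SK) IK)].
Qed.

Lemma c_eq1 : c H K = 1%nat <-> H = K.
Proof.
  split.
  - unfold c; rewrite (setIC H K) at 2; intro E.
    apply Nat.eq_mul_1 in E as [EH EK].
    destruct commensurable_index_spec as [IH IK]; rewrite EH in IH; rewrite EK in IK.
    apply functional_extensionality; intro x; apply propositional_extensionality.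
    split; [exact (sub_of_index_setI1 H K SH SK IH x) | exact (sub_of_index_setI1 K H SK SH IK x)].
  - intros <-; unfold c; now rewrite (index_setI_sub H H SH SH (fun x Hx => Hx)).
Qed.

End Commensurable.

Lemma c_sym H K : c H K = c K H.
Proof. unfold c; now rewrite (setIC K H), Nat.mul_comm. Qed.

Lemma c_submul H K L :
  is_subgroup H -> is_subgroup L ->
  commensurable H K -> commensurable K L -> commensurable H L ->
  (c H L <= c H K * c K L)%nat.
Proof.
  intros SH SL HK KL HL.
  destruct (commensurable_index_spec H K HK) as [HK1 HK2].
  destruct (commensurable_index_spec K L KL) as [KL1 KL2].
  destruct (commensurable_index_spec H L HL) as [HL1 HL2].
  pose proof (index_setI_submul H K L _ _ _ SH SL HK1 KL1 HL1).
  pose proof (index_setI_submul L K H _ _ _ SL SH KL2 HK2 HL2).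
  unfold c; rewrite (setIC H K) at 2; rewrite (setIC K L) at 2; rewrite (setIC H L) at 2.
  nia.
Qed.

End Subgroups.

Theorem corollary7 (G : group) (F : (G -> Prop) -> Prop)
  (HF : forall H, F H -> is_subgroup H)
  (Hcomm : forall H K, F H -> F K -> commensurable H K) :
  metric_on F (@d G).
Proof.
  assert (Hc_gt0 : forall H K, F H -> F K -> (0 < c H K)%nat)
    by (intros H K FH FK; apply c_gt0; auto).
  unfold metric_on, d; split; [| split; [| split]].
  - intros H K FH FK; rewrite <- ln_1; apply (ln_INR_le 1); [lia | apply Hc_gt0; auto].
  - intros H K FH FK; rewrite ln_INR_eq0 by auto; apply c_eq1; auto.
  - intros H K FH FK; now rewrite c_sym.
  - intros H K L FH FK FL.
    rewrite <- ln_mult, <- mult_INR by (apply lt_0_INR; auto).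
    apply ln_INR_le; [auto | apply c_submul; auto].
Qed.
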